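(* Let $q$ be odd, $\mathrm k\ge1$, $\kappa=\lfloor\mathrm k/2\rfloor$, $\nu\ge1$. Define for $u\in\mathbb S^1_{\mathrm k}$ $$R(u)=\sum_{\substack{f\text{ monic},\ \deg f=\nu,\ f(0)\ne0\\ f\text{ not irreducible},\ U(f)\equiv u\bmod S^{\mathrm k}}}\Lambda(f).$$ Then $$\langle R^2\rangle:=\frac1{q^\kappa}\sum_{u\in\mathbb S^1_{\mathrm k}}R(u)^2\ll_\nu q^{\nu-2\kappa}+q^{\frac23\nu-\kappa},$$ with implied constant depending only on $\nu$.
   Context: $\mathbb F_q$ finite field, $q$ odd; $\sigma(f)(S)=f(-S)$. $\mathbb S^1=\{g\in\mathbb F_q[[S]]:g(0)=1,\ g(S)g(-S)=1\}$ (unique square roots exist in $\mathbb S^1$); for $f\in\mathbb F_q[S]$ with $f(0)\ne0$, $U(f)=\sqrt{f/\sigma(f)}\in\mathbb S^1$. $\mathbb S^1_{\mathrm k}=\{f\in\mathbb F_q[S]/(S^{\mathrm k}): f(0)=1,\ f(S)f(-S)\equiv1\bmod S^{\mathrm k}\}$, of order $q^\kappa$. $\Lambda(f)=\deg P$ if $f=P^j$ for a monic irreducible $P$ and $j\ge1$, and $\Lambda(f)=0$ otherwise. *)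

From HB Require Import structures.
From mathcomp Require Import all_boot all_order all_algebra.
From Stdlib Require Import ClassicalEpsilon.
Set Implicit Arguments. Unset Strict Implicit. Unset Printing Implicit Defensive.
Import GRing.Theory.
Local Open Scope ring_scope.

Definition decide (P : Prop) : bool :=
  if excluded_middle_informative P then true else false.

Section Defs.
Variable F : finFieldType.

Definition sigma (p : {poly F}) : {poly F} := p \Po (- 'X).

Definition truncS (k : nat) (p : {poly F}) : {poly F} := p %% 'X^k.

(* S^1_k = { f in F_q[S]/(S^k) : f(0) = 1, f(S) f(-S) = 1 mod S^k },
   residues represented by polynomials of size <= k *)
Definition S1k (k : nat) : {set {poly_k F}} :=
  [set u : {poly_k F} | ((val u)`_0 == 1) &&
                        (truncS k (val u * sigma (val u)) == truncS k 1)].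

(* U(f) mod S^k: the element u of S^1_k which is the square root of
   f / sigma(f) mod S^k, i.e. u^2 * sigma(f) = f mod S^k (sigma(f) is
   invertible mod S^k since f(0) <> 0). Square roots in S^1_k are unique
   for q odd, so this is the reduction of U(f) = sqrt(f/sigma f). *)
Definition Umod (k : nat) (f : {poly F}) : option {poly_k F} :=
  [pick u in S1k k | truncS k (val u ^+ 2 * sigma f) == truncS k f].

Definition primepow_base (f : {poly F}) (P : {poly F}) : Prop :=
  P \is monic /\ irreducible_poly P /\ exists j : nat, (0 < j)%N /\ f = P ^+ j.

Definition Lambda (f : {poly F}) : nat :=
  if decide (exists P, primepow_base f P)
  then (size (epsilon (inhabits (0 : {poly F})) (primepow_base f))).-1
  else 0%N.

(* R(u) = sum of Lambda(f) over monic f of degree nu with f(0) <> 0,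
   f not irreducible, U(f) = u mod S^k.  Monic f of degree nu are
   enumerated as elements of {poly_(nu+1) F} of size nu+1. *)
Definition Rfun (k nu : nat) (u : {poly_k F}) : nat :=
  (\sum_(f : {poly_(nu.+1) F} |
          [&& (val f) \is monic, size (val f) == nu.+1, (val f).[0] != 0%R,
              ~~ decide (irreducible_poly (val f)) &
              Umod k (val f) == Some u])
     Lambda (val f))%N.

Definition sumR2 (k nu : nat) : nat :=
  (\sum_(u in S1k k) (Rfun nu u) ^ 2)%N.

End Defs.

(* Write f ~ g ([eqU k f g]) for f/σf = g/σg mod S^k; polynomials with the same U mod S^k
   are ~-related.  Since Λ(f) <= ν, Σ_u R(u)^2 is at most ν^2 times the number of ~-related
   pairs of reducible prime powers of degree ν, i.e. ν^2 Σ_{a,b >= 2} N(a,b), where N(a,b)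
   counts the pairs (P, Q) of monic irreducibles of degrees ν/a and ν/b with P^a ~ Q^b.  If
   a, b >= 3, then trivially N(a,b) <= q^(2ν/3).  If b = 2, then, since ~ is transitive on
   polynomials with nonzero constant term and squares may be cancelled (q odd), the admissible
   Q for a given P form one ~-class of monic polynomials of degree D = ν/2; two members of a
   class differ by a σ-odd polynomial whose odd coefficients below k vanish, which leaves
   q^(D - min(D,k)/2) choices.  If a = b = 2 and P <> σP, then P is coprime to σP, and Q is
   determined by the odd coefficients of degree >= k of P σQ - Q σP, leaving q^(D - min(2D,k)/2)
   choices; there are only q^(D/2) self-reciprocal P.  In every case the total exponent is at
   most ν - κ or 2ν/3. *)

From HB Require Import structures.
From mathcomp Require Import all_boot all_order all_algebra finfield.
From mathcomp Require Import zify ring.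
From Stdlib Require Import ClassicalEpsilon.
Set Implicit Arguments. Unset Strict Implicit. Unset Printing Implicit Defensive.
Import GRing.Theory.

Lemma card_ord_pred n (P : pred nat) : #|[pred i : 'I_n | P i]| = \sum_(i < n) P i.
Proof.
by rewrite -sum1_card big_mkcond /=; apply: eq_bigr => i _; rewrite inE; case: (P i).
Qed.

Lemma card_ord_notodd_ltn n k :
  #|[pred i : 'I_n | ~~ (odd i && (i < k))]| = n - (minn n k)./2.
Proof.
rewrite (card_ord_pred n (fun i => ~~ (odd i && (i < k)))).
elim: n => [|n IH]; first by rewrite big_ord0.
by rewrite big_ord_recr /= IH; case: (ltnP n k) => h /=; rewrite ?andbT ?andbF; lia.
Qed.

Lemma card_ord_even n : #|[pred i : 'I_n | ~~ odd i]| = n - n./2.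
Proof.
rewrite (card_ord_pred n (fun i => ~~ odd i)).
elim: n => [|n IH]; first by rewrite big_ord0.
by rewrite big_ord_recr /= IH; lia.
Qed.

Lemma card_ord_odd_geq n k : #|[pred i : 'I_n | odd i && (k <= i)]| = n./2 - (minn n k)./2.
Proof.
rewrite (card_ord_pred n (fun i => odd i && (k <= i))).
elim: n => [|n IH]; first by rewrite big_ord0.
by rewrite big_ord_recr /= IH; case: (ltnP n k) => h /=; rewrite ?andbT ?andbF; lia.
Qed.

Lemma card_le_coords (X J B : finType) (S : {set X}) (I : {pred J}) (c : X -> J -> B) :
  {in S &, forall x y, (forall j, j \in I -> c x j = c y j) -> x = y} ->
  #|S| <= #|B| ^ #|I|.
Proof.
move=> c_inj; pose phi x := [ffun j : {j | j \in I} => c x (val j)].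
rewrite -(card_in_imset (f := phi)); last first.
  move=> x y xS yS /ffunP phi_xy; apply: c_inj => // j Ij.
  by have := phi_xy (exist _ j Ij); rewrite !ffunE.
apply: leq_trans (max_card _) _.
by rewrite card_ffun card_sig.
Qed.

Lemma card_pairs (X Y : finType) (A : pred X) (B : X -> pred Y) :
  #|[set xy : X * Y | A xy.1 && B xy.1 xy.2]| = \sum_(x | A x) #|B x|.
Proof.
rewrite -sum1_card (eq_bigl (fun xy => A xy.1 && B xy.1 xy.2)) => [|xy]; last by rewrite inE.
rewrite -(pair_big_dep A B (fun _ _ => 1)) /=.
by apply: eq_bigr => x _; rewrite sum1_card.
Qed.

Lemma card_pairs_le (X Y : finType) (A : pred X) (B : X -> pred Y) c :
  (forall x, A x -> #|B x| <= c) ->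
  #|[set xy : X * Y | A xy.1 && B xy.1 xy.2]| <= #|A| * c.
Proof.
by move=> fiberB; rewrite card_pairs -sum_nat_const leq_sum.
Qed.

Lemma decideP (P : Prop) : reflect P (decide P).
Proof. by rewrite /decide; case: excluded_middle_informative => p; constructor. Qed.

Section Sigma.
Variable F : finFieldType.
Implicit Types p r : {poly F}.
Local Open Scope ring_scope.

Lemma odd_card_two_neq0 : odd #|F| -> (2 : F) != 0.
Proof.
move=> oddF; apply/negP => /eqP two_eq0.
have pchar2 : 2 \in [pchar F] by rewrite inE /= two_eq0 eqxx.
move: oddF (finNzRing_gt1 F); rewrite (card_pprimeChar pchar2).
by case: (logn 2 _) => [|n] //=; rewrite expnS oddM.
Qed.

Lemma coef_sigma p i : (sigma p)`_i = (-1) ^+ i * p`_i.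
Proof.
rewrite /sigma coef_comp_poly.
under eq_bigr => j _ do rewrite exprNn -[-1]polyCN -polyC_exp coefCM coefXn.
have [ltip|leqpi] := ltnP i (size p).
  rewrite (bigD1 (Ordinal ltip)) //= eqxx mulr1 big1 ?addr0; first by rewrite mulrC.
  move=> j neq_ji; rewrite eq_sym; case: eqP => [eq_ij|]; last by rewrite !mulr0.
  by move: neq_ji; rewrite -(inj_eq val_inj) /= eq_ij eqxx.
rewrite nth_default // mulr0 big1 // => j _.
case: eqP => [eq_ij|]; last by rewrite !mulr0.
by move: (ltn_ord j); rewrite -eq_ij ltnNge leqpi.
Qed.

Lemma sigmaM p r : sigma (p * r) = sigma p * sigma r. Proof. exact: comp_polyM. Qed.
Lemma sigmaB p r : sigma (p - r) = sigma p - sigma r. Proof. exact: comp_polyB. Qed.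
Lemma sigmaXn p n : sigma (p ^+ n) = sigma p ^+ n. Proof. exact: rmorphXn. Qed.

Lemma sigmaK : involutive (@sigma F).
Proof.
move=> p; apply/polyP => i; rewrite !coef_sigma mulrA -exprD addnn -mul2n exprM.
by rewrite sqrrN !expr1n mul1r.
Qed.

Lemma horner0_sigma p : (sigma p).[0] = p.[0].
Proof. by rewrite horner_comp hornerN hornerX oppr0. Qed.

Lemma size_sigma p : size (sigma p) = size p.
Proof. by rewrite size_comp_poly2 // size_polyN size_polyX. Qed.

Lemma dvdXn_mulKl k p r : p.[0] != 0 -> 'X^k %| p * r -> 'X^k %| r.
Proof.
move=> p0_neq0; rewrite mulrC Gauss_dvdpl //.
by apply: coprimep_expl; rewrite coprimep_sym coprimepX /root p0_neq0.
Qed.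

Lemma coprimep_sigma (P : {poly F}) : irreducible_poly P -> P.[0] != 0 -> sigma P != P ->
  coprimep P (sigma P).
Proof.
move=> irrP P0_neq0 sigmaP_neq; rewrite coprimep_def; apply: contraNT sigmaP_neq => gcd_ne1.
have P_eqp_sigma : P %= sigma P.
  rewrite -dvdp_size_eqp ?size_sigma //.
  by rewrite -(eqp_dvdl _ (irrP _ gcd_ne1 (dvdp_gcdl _ _))) dvdp_gcdr.
have /eqpP[[c1 c2] /= /andP[_ c2_neq0] eq_scale] := P_eqp_sigma.
have eq_c : c1 = c2.
  move/(congr1 (fun p => p.[0])): eq_scale; rewrite !hornerZ horner0_sigma.
  exact: mulIf.
by move: eq_scale; rewrite eq_c => /(scalerI c2_neq0) <-.
Qed.

Definition eqU k (f g : {poly F}) := 'X^k %| f * sigma g - g * sigma f.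

Lemma eqU_sym k (f g : {poly F}) : eqU k f g -> eqU k g f.
Proof. by rewrite /eqU -dvdpNr opprB. Qed.

Lemma eqU_trans k (g f h : {poly F}) : g.[0] != 0 -> eqU k f g -> eqU k g h -> eqU k f h.
Proof.
move=> g0_neq0 Ufg Ugh; apply: (@dvdXn_mulKl k (g * sigma g)).
  by rewrite hornerM horner0_sigma mulf_neq0.
have -> : g * sigma g * (f * sigma h - h * sigma f) =
  (f * sigma g - g * sigma f) * (g * sigma h) + (g * sigma h - h * sigma g) * (g * sigma f).
  by ring.
by rewrite dvdp_add // dvdp_mulr.
Qed.

Lemma eqUBl k (f f' g : {poly F}) : eqU k f g -> eqU k f' g -> eqU k (f - f') g.
Proof.
move=> Ufg Uf'g; rewrite /eqU sigmaB.
have -> : (f - f') * sigma g - g * (sigma f - sigma f') =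
   (f * sigma g - g * sigma f) - (f' * sigma g - g * sigma f') by ring.
exact: dvdp_sub.
Qed.

Lemma Umod_eqU k (f g : {poly F}) u : Umod k f = Some u -> Umod k g = Some u -> eqU k f g.
Proof.
rewrite /Umod /truncS; case: pickP => // u1 /andP[_ /eqP Uf] [<-].
case: pickP => // u2 /andP[_ /eqP Ug] [eq_u]; subst u2.
have dvd_f : 'X^k %| val u1 ^+ 2 * sigma f - f.
  by apply/modp_eq0P; rewrite modpD modpN Uf subrr.
have dvd_g : 'X^k %| val u1 ^+ 2 * sigma g - g.
  by apply/modp_eq0P; rewrite modpD modpN Ug subrr.
rewrite /eqU.
have -> : f * sigma g - g * sigma f =
  (val u1 ^+ 2 * sigma g - g) * sigma f - (val u1 ^+ 2 * sigma f - f) * sigma g by ring.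
by rewrite dvdp_sub // dvdp_mulr.
Qed.

Lemma poly_coefs_eq0 m p : (size p <= m)%N -> (forall i, (i < m)%N -> p`_i = 0) -> p = 0.
Proof.
move=> size_p coef_p; apply/polyP => i; rewrite coef0.
by have [/coef_p //|] := ltnP i m; move/leq_sizeP: size_p; apply.
Qed.

Lemma dvdXn_coef k p i : 'X^k %| p -> (i < k)%N -> p`_i = 0.
Proof. by case/dvdpP=> r -> lt_ik; rewrite coefMXn lt_ik. Qed.

Section OddCharacteristic.
Hypothesis two_neq0 : (2 : F) != 0.

Lemma eqU_sqr k (P Q : {poly F}) :
  P.[0] != 0 -> Q.[0] != 0 -> eqU k (P ^+ 2) (Q ^+ 2) -> eqU k P Q.
Proof.
move=> P0_neq0 Q0_neq0; rewrite /eqU !sigmaXn => dvd_sqr.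
apply: (@dvdXn_mulKl k (P * sigma Q + Q * sigma P)).
  rewrite hornerD !hornerM !horner0_sigma (mulrC Q.[0]) -mulr2n -mulr_natl.
  by rewrite !mulf_neq0.
have -> : (P * sigma Q + Q * sigma P) * (P * sigma Q - Q * sigma P) =
  P ^+ 2 * sigma Q ^+ 2 - Q ^+ 2 * sigma P ^+ 2 by ring.
exact: dvd_sqr.
Qed.

Lemma coef_sigma_fixed p i : sigma p = p -> odd i -> p`_i = 0.
Proof.
move=> sigma_p odd_i; have := coef_sigma p i; rewrite sigma_p -signr_odd odd_i mulN1r.
move/eqP; rewrite -subr_eq0 opprK -mulr2n -mulr_natl mulf_eq0 (negPf two_neq0).
by move/eqP.
Qed.

Lemma coef_sigma_antifixed p i : sigma p = - p -> ~~ odd i -> p`_i = 0.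
Proof.
move=> sigma_p even_i; have := coef_sigma p i.
rewrite sigma_p -signr_odd (negPf even_i) mul1r coefN.
move/eqP; rewrite eq_sym -subr_eq0 opprK -mulr2n -mulr_natl mulf_eq0 (negPf two_neq0).
by move/eqP.
Qed.

Definition monic_deg D (P : {poly F}) := (P \is monic) && (size P == D.+1).

Lemma size_monic_degB D (P Q : {poly F}) :
  monic_deg D P -> monic_deg D Q -> (size (P - Q)%R <= D)%N.
Proof.
move=> /andP[/monicP lP /eqP sP] /andP[/monicP lQ /eqP sQ]; apply/leq_sizeP => i le_Di.
rewrite coefB; case: (ltngtP D i) le_Di => // [lt_Di|<-] _.
  by rewrite !nth_default ?sP ?sQ ?subrr.
by move: lP lQ; rewrite !lead_coefE sP sQ => -> ->; rewrite subrr.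
Qed.

Section MonicCount.
Variable N : nat.

Lemma card_monic_deg D : (#|[set P : {poly_N F} | monic_deg D (val P)]| <= #|F| ^ D)%N.
Proof.
rewrite -[X in (_ ^ X)%N](card_ord D).
apply: (@card_le_coords _ _ _ _ 'I_D (fun (x : {poly_N F}) i => (val x)`_i)).
move=> x y; rewrite !inE => mx my eq_coef; apply/val_inj/eqP; rewrite -subr_eq0.
apply/eqP/(poly_coefs_eq0 (size_monic_degB mx my)) => i lt_iD.
by rewrite coefB (eq_coef (Ordinal lt_iD)) ?subrr.
Qed.

Lemma card_monic_deg_eqU D k (P1 : {poly F}) : P1.[0] != 0 ->
  (#|[set x : {poly_N F} | monic_deg D (val x) && eqU k (val x) P1]|
     <= #|F| ^ (D - (minn D k)./2))%N.
Proof.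
move=> P10_neq0; rewrite -card_ord_notodd_ltn.
apply: (@card_le_coords _ _ _ _ [pred i : 'I_D | ~~ (odd i && (i < k)%N)]
          (fun (x : {poly_N F}) i => (val x)`_i)).
move=> x y; rewrite !inE => /andP[mx Ux] /andP[my Uy] eq_coef.
apply/val_inj/eqP; rewrite -subr_eq0; apply/eqP; set d := val x - val y.
have size_d : (size d <= D)%N := size_monic_degB mx my.
have coef_d i : ~~ (odd i && (i < k)%N) -> (i < D)%N -> d`_i = 0.
  by move=> keep_i lt_iD; rewrite coefB (eq_coef (Ordinal lt_iD)) ?subrr ?inE.
have sigma_d : sigma d = - d.
  apply/polyP => i; rewrite coef_sigma coefN.
  have [lt_iD|le_Di] := ltnP i D; last by move/leq_sizeP: size_d => ->; rewrite ?mulr0 ?oppr0.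
  case keep_i: (odd i && (i < k)%N); last by rewrite coef_d ?keep_i // mulr0 oppr0.
  by case/andP: keep_i => odd_i _; rewrite -signr_odd odd_i mulN1r.
have : 'X^k %| (sigma P1 + P1) * d.
  by move: (eqUBl Ux Uy); rewrite /eqU -/d sigma_d; congr (_ %| _); ring.
move/dvdXn_mulKl; rewrite hornerD horner0_sigma -mulr2n -mulr_natl mulf_neq0 //.
move=> /(_ isT) dvd_d; apply: (poly_coefs_eq0 size_d) => i lt_iD.
case keep_i: (odd i && (i < k)%N); last by rewrite coef_d ?keep_i.
by case/andP: keep_i => _ lt_ik; apply: dvdXn_coef dvd_d lt_ik.
Qed.

Lemma card_monic_deg_sigma_fixed D :
  (#|[set x : {poly_N F} | monic_deg D (val x) && (sigma (val x) == val x)]|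
     <= #|F| ^ D./2)%N.
Proof.
have [odd_D|even_D] := boolP (odd D).
  rewrite (_ : [set _ | _] = set0) ?cards0 //; apply/setP => x; rewrite !inE.
  apply/negP => /andP[/andP[/monicP lead_x /eqP size_x] /eqP sigma_x].
  move: lead_x; rewrite lead_coefE size_x /= coef_sigma_fixed //.
  by move/eqP; rewrite eq_sym oner_eq0.
have -> : D./2 = (D - D./2)%N by move: even_D; lia.
rewrite -card_ord_even.
apply: (@card_le_coords _ _ _ _ [pred i : 'I_D | ~~ odd i]
          (fun (x : {poly_N F}) i => (val x)`_i)).
move=> x y; rewrite !inE => /andP[mx /eqP sx] /andP[my /eqP sy] eq_coef.
apply/val_inj/eqP; rewrite -subr_eq0; apply/eqP.
apply: (poly_coefs_eq0 (size_monic_degB mx my)) => i lt_iD.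
rewrite coefB; have [odd_i|even_i] := boolP (odd i); first by rewrite !coef_sigma_fixed ?subrr.
by rewrite (eq_coef (Ordinal lt_iD)) ?subrr ?inE.
Qed.

Lemma card_monic_deg_eqU_coprime D k (P : {poly F}) :
  monic_deg D P -> coprimep P (sigma P) ->
  (#|[set x : {poly_N F} | monic_deg D (val x) && eqU k P (val x)]|
     <= #|F| ^ (D - (minn D.*2 k)./2))%N.
Proof.
move=> mP coprimeP; rewrite -[X in (_ ^ (X - _))%N]doubleK -card_ord_odd_geq.
pose g (x : {poly_N F}) := P * sigma (val x) - val x * sigma P.
apply: (@card_le_coords _ _ _ _ [pred i : 'I_D.*2 | odd i && (k <= i)%N]
          (fun x i => (g x)`_i)).
move=> x y; rewrite !inE => /andP[mx Ux] /andP[my Uy] eq_coef.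
apply/val_inj/eqP; rewrite -subr_eq0; apply/eqP; set d := val x - val y.
set h := P * sigma d - d * sigma P.
have h_eq : h = g x - g y by rewrite /h /d /g sigmaB; ring.
have sigma_h : sigma h = - h by rewrite /h sigmaB !sigmaM !sigmaK; ring.
have dvd_h : 'X^k %| h by rewrite h_eq dvdp_sub.
have size_d : (size d <= D)%N := size_monic_degB mx my.
have /andP[_ /eqP size_P] := mP.
have size_h : (size h <= D.*2)%N.
  rewrite /h; apply: (leq_trans (size_polyD _ _)); rewrite size_polyN geq_max.
  by rewrite !(leq_trans (size_polyMleq _ _)) // size_sigma size_P
       ?addnS ?addSn -addnn ?leq_add2l ?leq_add2r.
have h_eq0 : h = 0.
  apply: (poly_coefs_eq0 size_h) => i lt_i2D.
  have [odd_i|even_i] := boolP (odd i); last exact: coef_sigma_antifixed.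
  have [lt_ik|le_ki] := ltnP i k; first exact: dvdXn_coef dvd_h lt_ik.
  by rewrite h_eq coefB (eq_coef (Ordinal lt_i2D)) ?subrr // inE odd_i.
have : P %| d * sigma P.
  by apply/dvdpP; exists (sigma d); apply/eqP; rewrite eq_sym mulrC -subr_eq0 -/h h_eq0.
rewrite Gauss_dvdpl // => P_dvd_d; apply/eqP; apply: contraT => d_neq0.
by have := dvdp_leq d_neq0 P_dvd_d; rewrite size_P ltnNge size_d.
Qed.

End MonicCount.

Section PrimePowerPairs.
Variables nu k : nat.
Hypothesis nu_gt0 : (0 < nu)%N.
Local Notation T := {poly_(nu.+1) F}.
Local Notation q := #|F|.
Implicit Types P Q f g : T.

Definition prime_base a (P : T) : bool :=
  [&& monic_deg (nu %/ a) (val P), (val P).[0] != 0,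
      decide (irreducible_poly (val P)) & (a %| nu)%N].

Definition base_fiber a b (P : T) : pred T :=
  fun Q : T => prime_base b Q && eqU k (val P ^+ a) (val Q ^+ b).

Definition base_pairs a b :=
  [set PQ : T * T | prime_base a PQ.1 && base_fiber a b PQ.1 PQ.2].

(* q^κ times the claimed bound; the first term is dropped when κ > ν, where truncated
   subtraction would turn it into 1. *)
Definition pair_bound :=
  ((if (k./2 <= nu)%N then q ^ (nu - k./2) else 0) + q ^ ((2 * nu) %/ 3))%N.

Lemma expn_le_pair_bound e :
  ((e + k./2 <= nu) || (3 * e <= 2 * nu))%N -> (q ^ e <= pair_bound)%N.
Proof.
have q_gt0 : (0 < q)%N by apply/card_gt0P; exists 0.
case/orP => [le_e|le_3e].
  have le_kappa : (k./2 <= nu)%N by apply: leq_trans le_e; apply: leq_addl.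
  rewrite /pair_bound le_kappa (leq_trans _ (leq_addr _ _)) // leq_pexp2l //; lia.
by rewrite /pair_bound (leq_trans _ (leq_addl _ _)) // leq_pexp2l // leq_divRL // mulnC.
Qed.

Lemma prime_base0 a P : prime_base a P -> (val P).[0] != 0.
Proof. by case/and4P. Qed.

Lemma card_prime_base a : (#|prime_base a| <= q ^ (nu %/ a))%N.
Proof.
apply: leq_trans (card_monic_deg (nu.+1) (nu %/ a)); apply: subset_leq_card.
by apply/subsetP => P; rewrite !inE => /and4P[].
Qed.

Lemma prime_base_pow0 a P : prime_base a P -> (val P ^+ a).[0] != 0.
Proof. by move/prime_base0 => P0_neq0; rewrite horner_exp expf_neq0. Qed.

Lemma card_base_fiber2 a P : prime_base a P ->
  (#|base_fiber a 2 P| <= q ^ (nu %/ 2 - (minn (nu %/ 2) k)./2))%N.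
Proof.
move=> baseP; case: (pickP (base_fiber a 2 P)) => [Q1 /andP[baseQ1 UPQ1]|fiber0]; last first.
  by rewrite eq_card0.
apply: leq_trans (card_monic_deg_eqU (nu.+1) _ k (prime_base0 baseQ1)).
apply: subset_leq_card; apply/subsetP => Q /andP[baseQ UPQ]; rewrite inE.
case/and4P: (baseQ) => -> _ _ _ /=.
apply: eqU_sqr; rewrite ?(prime_base0 baseQ) ?(prime_base0 baseQ1) //.
exact: eqU_trans (prime_base_pow0 baseP) (eqU_sym UPQ) UPQ1.
Qed.

Lemma leq_mul_divn a c : (c <= a)%N -> (a %| nu)%N -> (c * (nu %/ a) <= nu)%N.
Proof.
move=> le_ca a_dvd; rewrite -[X in (_ <= X)%N](divnK a_dvd) mulnC.
by rewrite leq_mul2l le_ca orbT.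
Qed.

Lemma base_pairs_eq0 a b : ~~ ((a %| nu) && (b %| nu))%N -> base_pairs a b = set0.
Proof.
move=> ndvd; apply/setP => -[P Q]; rewrite !inE /=.
by apply: contraNF ndvd => /andP[/and4P[_ _ _ ->] /andP[/and4P[_ _ _ ->] _]].
Qed.

Lemma card_base_pairs_sym a b : #|base_pairs a b| = #|base_pairs b a|.
Proof.
have swapK : involutive (fun PQ : T * T => (PQ.2, PQ.1)) by case.
rewrite -(card_imset _ (inv_inj swapK)) (can2_imset_pre _ swapK swapK).
apply: eq_card => -[P Q]; rewrite !inE /=.
by apply/and3P/and3P => -[baseP baseQ /eqU_sym].
Qed.

Lemma card_base_pairs_ge3 a b : (3 <= a)%N -> (3 <= b)%N -> (a %| nu)%N -> (b %| nu)%N ->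
  (#|base_pairs a b| <= pair_bound)%N.
Proof.
move=> a_ge3 b_ge3 a_dvd b_dvd.
apply: leq_trans (card_pairs_le (c := q ^ (nu %/ b)) _) _.
  move=> P _; apply: leq_trans (card_prime_base b); apply: subset_leq_card.
  by apply/subsetP => Q /andP[].
apply: leq_trans (leq_mul (card_prime_base a) (leqnn _)) _.
have := leq_mul_divn a_ge3 a_dvd; have := leq_mul_divn b_ge3 b_dvd.
by rewrite -expnD => le_b le_a; apply: expn_le_pair_bound; apply/orP; right; lia.
Qed.

Lemma card_base_pairs_ge3_2 a : (3 <= a)%N -> (a %| nu)%N -> (2 %| nu)%N ->
  (#|base_pairs a 2| <= pair_bound)%N.
Proof.
move=> a_ge3 a_dvd two_dvd.
apply: leq_trans (card_pairs_le (c := q ^ (nu %/ 2 - (minn (nu %/ 2) k)./2)) _) _.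
  exact: card_base_fiber2.
apply: leq_trans (leq_mul (card_prime_base a) (leqnn _)) _.
have := leq_mul_divn a_ge3 a_dvd; have := divnK two_dvd.
by rewrite -expnD => deg_2 le_a; apply: expn_le_pair_bound; lia.
Qed.

Lemma card_base_pairs_22 : (2 %| nu)%N -> (#|base_pairs 2 2| <= 2 * pair_bound)%N.
Proof.
move=> two_dvd; have deg_2 := divnK two_dvd; set D := (nu %/ 2)%N in deg_2 *.
pose fixed := [pred P : T | sigma (val P) == val P].
rewrite -(cardsID [set PQ | fixed PQ.1]) mul2n -addnn leq_add //.
  have fixed_pairs : (#|base_pairs 2 2 :&: [set PQ | fixed PQ.1]|
                       <= #|predI (prime_base 2) fixed| * q ^ (D - (minn D k)./2))%N.
    apply: (leq_trans _ (card_pairs_le (B := base_fiber 2 2) _)).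
    - apply: subset_leq_card; apply/subsetP => -[P Q].
      by rewrite !inE /= => /andP[/andP[-> ->] ->].
    - by move=> P /andP[baseP _]; apply: card_base_fiber2 baseP.
  have card_fixed : (#|predI (prime_base 2) fixed| <= q ^ D./2)%N.
    apply: leq_trans (card_monic_deg_sigma_fixed (nu.+1) D); apply: subset_leq_card.
    by apply/subsetP => P; rewrite !inE => /andP[/and4P[-> _ _ _] ->].
  apply: leq_trans fixed_pairs (leq_trans (leq_mul card_fixed (leqnn _)) _).
  by rewrite -expnD; apply: expn_le_pair_bound; lia.
have free_pairs : (#|base_pairs 2 2 :\: [set PQ | fixed PQ.1]|
                    <= #|predI (prime_base 2) (predC fixed)| * q ^ (D - (minn D.*2 k)./2))%N.
  apply: (leq_trans _ (card_pairs_le (B := base_fiber 2 2) _)).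
  - apply: subset_leq_card; apply/subsetP => -[P Q].
    by rewrite !inE /= => /andP[/negPf -> /andP[-> ->]].
  - move=> P /andP[/and4P[degP P0_neq0 /decideP irrP _] not_fixed].
    apply: leq_trans (card_monic_deg_eqU_coprime (nu.+1) k degP
                        (coprimep_sigma irrP P0_neq0 not_fixed)).
    apply: subset_leq_card; apply/subsetP => Q /andP[baseQ UPQ]; rewrite inE.
    case/and4P: (baseQ) => -> Q0_neq0 _ _ /=.
    exact: eqU_sqr (prime_base0 baseQ) UPQ.
have card_free : (#|predI (prime_base 2) (predC fixed)| <= q ^ D)%N.
  apply: leq_trans (card_prime_base 2); apply: subset_leq_card.
  by apply/subsetP => P /andP[].
apply: leq_trans free_pairs (leq_trans (leq_mul card_free (leqnn _)) _).
by rewrite -expnD; apply: expn_le_pair_bound; lia.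
Qed.

Lemma card_base_pairs a b : (2 <= a)%N -> (2 <= b)%N ->
  (#|base_pairs a b| <= 2 * pair_bound)%N.
Proof.
move=> a_ge2 b_ge2.
have [/andP[a_dvd b_dvd]|ndvd] := boolP ((a %| nu) && (b %| nu))%N; last first.
  by rewrite base_pairs_eq0 ?cards0.
have le_bound : (pair_bound <= 2 * pair_bound)%N by rewrite leq_pmull.
case: (ltngtP a 2) a_ge2 a_dvd => // [a_ge3|->] _ a_dvd;
  case: (ltngtP b 2) b_ge2 b_dvd => // [b_ge3|->] _ b_dvd.
- exact: leq_trans (card_base_pairs_ge3 a_ge3 b_ge3 a_dvd b_dvd) le_bound.
- exact: leq_trans (card_base_pairs_ge3_2 a_ge3 a_dvd b_dvd) le_bound.
- rewrite card_base_pairs_sym.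
  exact: leq_trans (card_base_pairs_ge3_2 b_ge3 b_dvd a_dvd) le_bound.
- exact: card_base_pairs_22.
Qed.

Definition proper_prime_power (f : T) : bool :=
  [&& val f \is monic, size (val f) == nu.+1, (val f).[0] != 0,
      ~~ decide (irreducible_poly (val f)) & (0 < Lambda (val f))%N].

Lemma proper_prime_powerP f : proper_prime_power f ->
  (Lambda (val f) <= nu)%N /\
  exists (a : 'I_nu.+1) (P : T), [&& (2 <= a)%N, prime_base a P & val f == val P ^+ a].
Proof.
case/and5P => _ /eqP size_f f0_neq0 /decideP red_f.
rewrite /Lambda; case: decideP => [ex_base|]; last by rewrite ltnn.
have [monP [irrP [j [j_gt0 eq_f]]]] :=
  epsilon_spec (inhabits (0 : {poly F})) (primepow_base (val f)) ex_base.
set P := epsilon _ _ in monP irrP eq_f * => _.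
have deg_f : ((size P).-1 * j)%N = nu by rewrite -size_exp -eq_f size_f.
have size_P_gt1 : (1 < size P)%N by case: irrP.
have j_neq1 : j != 1%N by apply: contra_notN red_f => /eqP j_eq1; rewrite eq_f j_eq1 expr1.
have lt_j_nu1 : (j < nu.+1)%N by rewrite ltnS -deg_f leq_pmull // -ltnS prednK // ltnW.
have size_P : (size P <= nu.+1)%N.
  by rewrite -(prednK (ltnW size_P_gt1)) ltnS -deg_f leq_pmulr.
split; first by rewrite -deg_f leq_pmulr.
have val_P : val (npolyp nu.+1 P) = P := npolypK size_P.
exists (Ordinal lt_j_nu1), (npolyp nu.+1 P); rewrite val_P eq_f eqxx andbT.
apply/andP; split; first by rewrite ltn_neqAle eq_sym j_neq1.
have deg_P : (nu %/ j)%N = (size P).-1 by rewrite -deg_f mulnK.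
have j_dvd : (j %| nu)%N by rewrite -deg_f dvdn_mull.
have P0_neq0 : P.[0] != 0.
  by apply: contra f0_neq0; rewrite eq_f horner_exp => /eqP ->; rewrite expr0n eqn0Ngt j_gt0.
have degP : monic_deg (size P).-1 P.
  by rewrite /monic_deg monP (prednK (ltnW size_P_gt1)) eqxx.
rewrite /prime_base val_P deg_P degP P0_neq0 j_dvd andbT.
exact/decideP.
Qed.

Definition fiberU (u : {poly_k F}) :=
  [set f : T | proper_prime_power f && (Umod k (val f) == Some u)].

Lemma Rfun_le_card_fiberU u : (Rfun nu u <= nu * #|fiberU u|)%N.
Proof.
rewrite /Rfun (bigID (fun f : T => 0 < Lambda (val f))%N) /=.
rewrite [X in (_ + X)%N]big1 => [|f /andP[_]]; last by rewrite lt0n negbK => /eqP.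
rewrite addn0 (eq_bigl (fun f => f \in fiberU u)) => [|f]; last first.
  by rewrite /fiberU inE /proper_prime_power -!andbA; do 4!congr andb; rewrite andbC.
rewrite mulnC -sum_nat_const; apply: leq_sum => f.
by rewrite /fiberU inE => /andP[/proper_prime_powerP[]].
Qed.

Definition eqU_pairs := [set fg : T * T | [&& proper_prime_power fg.1,
                                              proper_prime_power fg.2 &
                                              eqU k (val fg.1) (val fg.2)]].

Lemma sum_card_fiberU_sqr : (\sum_(u in S1k F k) #|fiberU u| ^ 2 <= #|eqU_pairs|)%N.
Proof.
rewrite (eq_bigr (fun u => #|[pred fg | fg \in setX (fiberU u) (fiberU u)]|)); last first.
  by move=> u _; rewrite cardsX mulnn.
rewrite -(card_pairs (fun u => u \in S1k F k)).
rewrite -(card_in_imset (f := snd)); last first.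
  move=> [u [f g]] [u' [f' g']]; rewrite !inE /= => /andP[_ /andP[fU _]] /andP[_ /andP[fU' _]].
  move=> /= [eq_f eq_g]; subst f' g'.
  by move: fU fU' => /andP[_ /eqP ->] /andP[_ /eqP [->]].
apply: subset_leq_card; apply/subsetP => _ /imsetP[[u [f g]] + ->].
rewrite !inE /= => /andP[_ /andP[/andP[ppf /eqP Uf] /andP[ppg /eqP Ug]]].
by rewrite ppf ppg (Umod_eqU Uf Ug).
Qed.

Lemma card_eqU_pairs : (#|eqU_pairs| <= nu.+1 ^ 2 * (2 * pair_bound))%N.
Proof.
pose pow (x : ('I_nu.+1 * 'I_nu.+1) * (T * T)) : T * T :=
  (npolyp nu.+1 (val x.2.1 ^+ x.1.1), npolyp nu.+1 (val x.2.2 ^+ x.1.2)).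
pose exps := [pred ab : 'I_nu.+1 * 'I_nu.+1 | (2 <= ab.1) && (2 <= ab.2)]%N.
pose bases := [set x | exps x.1 && (x.2 \in base_pairs x.1.1 x.1.2)].
have pairs_pow : eqU_pairs \subset pow @: bases.
  apply/subsetP => -[f g]; rewrite inE /= => /and3P[ppf ppg Ufg].
  have [_ [a [P /and3P[a_ge2 baseP /eqP eq_f]]]] := proper_prime_powerP ppf.
  have [_ [b [Q /and3P[b_ge2 baseQ /eqP eq_g]]]] := proper_prime_powerP ppg.
  apply/imsetP; exists ((a, b), (P, Q)).
    by rewrite inE /= a_ge2 b_ge2 inE /= baseP /base_fiber baseQ -eq_f -eq_g.
  by congr (_, _); apply: val_inj; rewrite /= npolypK // -?eq_f -?eq_g size_npoly.
apply: leq_trans (subset_leq_card pairs_pow) (leq_trans (leq_imset_card _ _) _).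
apply: leq_trans (@card_pairs_le _ _ exps (fun ab PQ => PQ \in base_pairs ab.1 ab.2)
                   (2 * pair_bound) _) _.
  by move=> [a b] /andP[a_ge2 b_ge2]; apply: card_base_pairs.
by rewrite leq_mul2r (leq_trans (max_card _)) ?orbT // card_prod card_ord mulnn.
Qed.

Lemma sumR2_le : (sumR2 F k nu <= nu ^ 2 * (nu.+1 ^ 2 * (2 * pair_bound)))%N.
Proof.
apply: leq_trans (leq_mul (leqnn _) (leq_trans sum_card_fiberU_sqr card_eqU_pairs)).
rewrite /sumR2 big_distrr /=; apply: leq_sum => u _.
by rewrite -expnMn leq_exp2r // Rfun_le_card_fiberU.
Qed.

End PrimePowerPairs.
End OddCharacteristic.
End Sigma.

From Stdlib Require Import Reals Lra.

Lemma INR_expn m n : INR (expn m n) = (INR m ^ n)%R.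
Proof. by elim: n => [|n IHn] //; rewrite expnS -multE mult_INR IHn /= Rmult_comm. Qed.

Lemma INR_pair_bound (F : finFieldType) nu k :
  (INR (pair_bound F nu k) <=
     Rpower (INR #|F|) (INR nu - INR k./2) + Rpower (INR #|F|) (2 / 3 * INR nu))%R.
Proof.
have q_gt1 := finNzRing_gt1 F.
have q_gt0 : (0 < INR #|F|)%R by apply/lt_0_INR/ltP/ltnW.
have q_ge1 : (1 <= INR #|F|)%R by apply/(le_INR 1)/leP/ltnW.
rewrite /pair_bound -plusE plus_INR; apply: Rplus_le_compat.
  case: ifP => [le_kappa|_]; last exact/Rlt_le/exp_pos.
  by rewrite INR_expn -Rpower_pow // -minusE minus_INR; [apply: Rle_refl|apply/leP].
rewrite INR_expn -Rpower_pow //; apply: Rle_Rpower => //.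
have /leP/le_INR := leq_divM (2 * nu) 3.
by rewrite -!multE !mult_INR /=; lra.
Qed.

Theorem lemma6p9 (nu : nat) (hnu : (1 <= nu)%N) :
  exists C : R, (0 < C)%R /\
    forall (F : finFieldType) (k : nat),
      odd #|F| -> (1 <= k)%N ->
      let q := INR #|F| in
      let kappa := INR (k./2) in
      (INR (sumR2 F k nu) / Rpower q kappa
         <= C * (Rpower q (INR nu - 2 * kappa)
                 + Rpower q (2 / 3 * INR nu - kappa)))%R.
Proof.
exists (INR (expn nu 2 * expn nu.+1 2 * 2)); split.
  by apply/lt_0_INR/ltP; rewrite !muln_gt0 hnu.
move=> F k oddF _ q kappa.
have qkappa_gt0 : (0 < Rpower q kappa)%R by apply: exp_pos.
have shift e : Rpower q (e - kappa) = (Rpower q e / Rpower q kappa)%R.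
  by rewrite /Rminus Rpower_plus Rpower_Ropp.
have -> : (INR nu - 2 * kappa = (INR nu - kappa) - kappa)%R by ring.
rewrite (shift (INR nu - kappa)%R) (shift (2 / 3 * INR nu)%R).
rewrite /Rdiv -Rmult_plus_distr_r -Rmult_assoc.
apply: Rmult_le_compat_r; first exact/Rlt_le/Rinv_0_lt_compat.
have /leP/le_INR := sumR2_le (odd_card_two_neq0 oddF) k hnu.
rewrite !mulnA -multE mult_INR => /Rle_trans; apply.
apply: Rmult_le_compat_l; [exact: pos_INR | exact: INR_pair_bound].
Qed.
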